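(* Let $g$ be a nonnegative function on $\mathbb{R}^3$ with $$\int_{\mathbb{R}^3} g\,dv=1,\quad \int_{\mathbb{R}^3} g(v)v_i\,dv=0\ (i=1,2,3),\quad\int_{\mathbb{R}^3} g(v)|v|^2\,dv=3.$$ Suppose that $|\hat g(\xi)|\leq K_1e^{-K_2\varphi(|\xi|)}$ for all $\xi\in\mathbb{R}^3$, where $K_1\geq1$, $K_2>0$ and $\varphi:[0,+\infty)\to[0,+\infty)$ satisfies $\lim_{t\to+\infty}\varphi(t)=+\infty$. Then there exists $\eta>0$ such that for every $R>\eta$ there exists $K>0$ (depending on $R$) with $$|\hat g(\xi)|\leq e^{-K|\xi|^2}\ \text{ for }|\xi|<R,\qquad |\hat g(\xi)|\leq e^{-K\varphi(|\xi|)}\ \text{ for }|\xi|\geq R.$$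
   Context: $\hat g(\xi)=\int_{\mathbb{R}^3} g(v)e^{-i\xi\cdot v}dv$. *)

From HB Require Import structures.
From mathcomp Require Import all_boot all_order all_algebra.
From mathcomp Require Import all_classical all_reals all_analysis.
Set Implicit Arguments. Unset Strict Implicit. Unset Printing Implicit Defensive.
Import Order.TTheory GRing.Theory Num.Theory.
Local Open Scope ring_scope.

Section Defs.
Variable R : realType.

Definition R3 := ((R * R) * R)%type.

Definition leb3 := ((@lebesgue_measure R \x @lebesgue_measure R) \x @lebesgue_measure R)%E.

Definition c1 (v : R3) : R := v.1.1.
Definition c2 (v : R3) : R := v.1.2.
Definition c3 (v : R3) : R := v.2.

Definition dot3 (x y : R3) : R := c1 x * c1 y + c2 x * c2 y + c3 x * c3 y.
Definition sqnorm3 (x : R3) : R := dot3 x x.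
Definition norm3 (x : R3) : R := Num.sqrt (sqnorm3 x).

(* \hat g(xi) = \int g(v) e^{-i xi.v} dv = FRe g xi + i * FIm g xi *)
Definition FRe (g : R3 -> R) (xi : R3) : R :=
  Rintegral leb3 setT (fun v => g v * cos (dot3 xi v)).
Definition FIm (g : R3 -> R) (xi : R3) : R :=
  - Rintegral leb3 setT (fun v => g v * sin (dot3 xi v)).
Definition Fabs (g : R3 -> R) (xi : R3) : R :=
  Num.sqrt (FRe g xi ^+ 2 + FIm g xi ^+ 2).
End Defs.

(* For every probability density g the transform satisfies the doubling
   inequality 1 - |ĝ(2ξ)|^2 <= 4 (1 - |ĝ(ξ)|^2): rotating the phase so that
   ĝ(ξ) is real, 1 - |ĝ(2ξ)|^2 is at most 4 P Q, where P and Q are the means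
   of the squared cosine and sine of the rotated phase.  The assumed bound on ĝ
   and phi -> +oo give |ĝ| <= 1/2 outside some ball of radius T; doubling a
   small ξ until it reaches the annulus T <= |ξ| < 2T then yields
   1 - |ĝ(ξ)|^2 >= c |ξ|^2, hence the Gaussian bound inside the ball, while
   outside it half of the decay rate K2 absorbs the constant K1. *)

From HB Require Import structures.
From mathcomp Require Import all_boot all_order all_algebra.
From mathcomp Require Import all_classical all_reals all_analysis.
From mathcomp Require Import measurable_realfun ring lra.
Set Implicit Arguments.
Unset Strict Implicit.
Unset Printing Implicit Defensive.

Import Order.TTheory GRing.Theory Num.Theory.
Local Open Scope classical_set_scope.
Local Open Scope ring_scope.

Lemma sqr_dot2_le {R : realFieldType} (a b x y : R) :
  (a * x + b * y) ^+ 2 <= (a ^+ 2 + b ^+ 2) * (x ^+ 2 + y ^+ 2).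
Proof.
have -> : (a ^+ 2 + b ^+ 2) * (x ^+ 2 + y ^+ 2) =
          (a * x + b * y) ^+ 2 + (a * y - b * x) ^+ 2 by ring.
by rewrite lerDl sqr_ge0.
Qed.

Lemma unit_vector_aligned {R : rcfType} (A B : R) :
  exists a b, a ^+ 2 + b ^+ 2 = 1 /\ a * A + b * B = Num.sqrt (A ^+ 2 + B ^+ 2).
Proof.
have [AB0|AB_neq0] := eqVneq (A ^+ 2 + B ^+ 2) 0.
  move/eqP: AB0; rewrite paddr_eq0 ?sqr_ge0 // !sqrf_eq0 => /andP[/eqP-> /eqP->].
  by exists 1, 0; rewrite expr0n /= !addr0 sqrtr0 mulr0 expr1n mul0r addr0.
set r := Num.sqrt _.
have rr : r ^+ 2 = A ^+ 2 + B ^+ 2 by rewrite sqr_sqrtr // addr_ge0 ?sqr_ge0.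
have r_neq0 : r != 0 by rewrite -sqrf_eq0 rr.
exists (A / r), (B / r); split.
  by rewrite !expr_div_n -mulrDl -rr divff // sqrf_eq0.
rewrite [A / r * A]mulrC [B / r * B]mulrC !mulrA -!expr2 -mulrDl -rr.
by rewrite expr2 mulrK // unitfE.
Qed.

Lemma rotated_cos2Dsin2 {R : realType} (a b x : R) : a ^+ 2 + b ^+ 2 = 1 ->
  (a * cos x + b * sin x) ^+ 2 + (a * sin x - b * cos x) ^+ 2 = 1.
Proof.
move=> ab1; rewrite -[RHS](cos2Dsin2 x) -[RHS]mul1r -ab1; ring.
Qed.

Lemma rotated_cos_sin_double {R : realType} (a b x : R) :
  (a ^+ 2 - b ^+ 2) * cos (2 * x) + (2 * a * b) * sin (2 * x) =
  (a * cos x + b * sin x) ^+ 2 - (a * sin x - b * cos x) ^+ 2.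
Proof.
have -> : 2 * x = x + x by ring.
by rewrite cosD sinD; ring.
Qed.

Section WeightedMean.
Context {R : realType} {d : measure_display} {T : measurableType d}.
Variables (mu : {measure set T -> \bar R}) (g : T -> R).
Hypotheses (mg : measurable_fun setT g) (g_ge0 : forall v, 0 <= g v).
Hypothesis g_int1 : (\int[mu]_v (g v)%:E = 1%:E)%E.

Definition bounded_measurable (h : T -> R) :=
  measurable_fun setT h /\ exists C : R, forall v, `|h v| <= C.

Lemma bounded_measurable_cst k : bounded_measurable (fun _ => k).
Proof. by split; [exact: measurable_cst | exists `|k|]. Qed.

Lemma bounded_measurableD h1 h2 : bounded_measurable h1 -> bounded_measurable h2 ->
  bounded_measurable (fun v => h1 v + h2 v).
Proof.
case=> m1 [C1 H1] [m2 [C2 H2]]; split; first exact: measurable_funD.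
by exists (C1 + C2) => v; apply: le_trans (ler_normD _ _) (lerD (H1 v) (H2 v)).
Qed.

Lemma bounded_measurableM h1 h2 : bounded_measurable h1 -> bounded_measurable h2 ->
  bounded_measurable (fun v => h1 v * h2 v).
Proof.
case=> m1 [C1 H1] [m2 [C2 H2]]; split; first exact: measurable_funM.
by exists (C1 * C2) => v; rewrite normrM; apply: ler_pM.
Qed.

Lemma bounded_measurableZ k h : bounded_measurable h ->
  bounded_measurable (fun v => k * h v).
Proof. exact/bounded_measurableM/bounded_measurable_cst. Qed.

Lemma bounded_measurableB h1 h2 : bounded_measurable h1 -> bounded_measurable h2 ->
  bounded_measurable (fun v => h1 v - h2 v).
Proof.
move=> b1 /(bounded_measurableZ (-1)) b2.
rewrite (_ : (fun v => _) = fun v => h1 v + -1 * h2 v); first exact: bounded_measurableD.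
by apply: funext => v; ring.
Qed.

Lemma bounded_measurable_cos theta : measurable_fun setT theta ->
  bounded_measurable (fun v => cos (theta v)).
Proof.
split; first exact: measurableT_comp (continuous_measurable_fun (@continuous_cos R)) _.
by exists 1 => v; rewrite ler_norml cos_le1 cos_geN1.
Qed.

Lemma bounded_measurable_sin theta : measurable_fun setT theta ->
  bounded_measurable (fun v => sin (theta v)).
Proof.
split; first exact: measurableT_comp (continuous_measurable_fun (@continuous_sin R)) _.
by exists 1 => v; rewrite ler_norml sin_le1 sin_geN1.
Qed.

Definition wmean (h : T -> R) : R := Rintegral mu setT (fun v => g v * h v).

Lemma integrable_weighted h : bounded_measurable h ->
  mu.-integrable setT (EFin \o (fun v => g v * h v)).
Proof.
case=> mh [C hC]; have C0 : 0 <= C.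
  by apply: le_trans (normr_ge0 _) (hC _); apply: point.
have g_int : mu.-integrable setT (EFin \o g).
  apply/integrableP; split; first exact/measurable_EFinP.
  by under eq_integral => x _ do rewrite /= ger0_norm//; rewrite g_int1 ltry.
apply: (le_integrable measurableT _ _ (integrableZl measurableT C g_int)).
  exact/measurable_EFinP/measurable_funM.
move=> v _ /=; rewrite lee_fin !normrM (ger0_norm (g_ge0 v)) (ger0_norm C0).
by rewrite mulrC ler_wpM2r.
Qed.

Lemma wmeanD h1 h2 : bounded_measurable h1 -> bounded_measurable h2 ->
  wmean (fun v => h1 v + h2 v) = wmean h1 + wmean h2.
Proof.
move=> b1 b2; rewrite /wmean -RintegralD //; try exact: integrable_weighted.
by apply: eq_Rintegral => v _; rewrite mulrDr.
Qed.

Lemma wmeanZ k h : bounded_measurable h -> wmean (fun v => k * h v) = k * wmean h.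
Proof.
move=> b; rewrite /wmean -RintegralZl //; last exact: integrable_weighted.
by apply: eq_Rintegral => v _; rewrite mulrCA.
Qed.

Lemma wmeanB h1 h2 : bounded_measurable h1 -> bounded_measurable h2 ->
  wmean (fun v => h1 v - h2 v) = wmean h1 - wmean h2.
Proof.
move=> b1 b2; rewrite (_ : (fun v => _) = fun v => h1 v + -1 * h2 v).
  by rewrite wmeanD ?wmeanZ ?mulN1r //; exact: bounded_measurableZ.
by apply: funext => v; ring.
Qed.

Lemma wmean1 : wmean (fun _ => 1) = 1.
Proof.
by rewrite /wmean /Rintegral; under eq_integral do rewrite mulr1; rewrite g_int1.
Qed.

Lemma wmean_ge0 h : (forall v, 0 <= h v) -> 0 <= wmean h.
Proof. by move=> h0; apply: Rintegral_ge0 => v _; rewrite mulr_ge0. Qed.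

Lemma sqr_wmean_le h : bounded_measurable h -> wmean h ^+ 2 <= wmean (fun v => h v ^+ 2).
Proof.
move=> bh; set m := wmean h.
have bh2 : bounded_measurable (fun v => h v ^+ 2) by exact: bounded_measurableM.
have b1 := bounded_measurable_cst 1.
have var : wmean (fun v => (h v - m) ^+ 2) = wmean (fun v => h v ^+ 2) - m ^+ 2.
  rewrite (_ : (fun v => _) = fun v => h v ^+ 2 + ((- 2 * m) * h v + m ^+ 2 * 1)).
    rewrite !wmeanD ?wmeanZ ?wmean1 -/m //; first ring.
    + exact: bounded_measurableZ.
    + exact: bounded_measurableZ.
    + by apply: bounded_measurableD; exact: bounded_measurableZ.
  by apply: funext => v; ring.
by rewrite -subr_ge0 -var; apply: wmean_ge0 => v; exact: sqr_ge0.
Qed.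

Definition sqr_abs_fourier (theta : T -> R) : R :=
  wmean (fun v => cos (theta v)) ^+ 2 + wmean (fun v => sin (theta v)) ^+ 2.

Lemma sqr_abs_fourier_le1 (theta : T -> R) : measurable_fun setT theta ->
  sqr_abs_fourier theta <= 1.
Proof.
move=> mt; have bC := bounded_measurable_cos mt; have bS := bounded_measurable_sin mt.
rewrite -wmean1 -(funext (fun v => cos2Dsin2 (theta v))).
rewrite wmeanD //; try exact: bounded_measurableM.
by apply: lerD; apply: sqr_wmean_le.
Qed.

Lemma sqr_abs_fourier_double (theta : T -> R) : measurable_fun setT theta ->
  1 - sqr_abs_fourier (fun v => 2 * theta v) <= 4 * (1 - sqr_abs_fourier theta).
Proof.
move=> mt; have bC := bounded_measurable_cos mt; have bS := bounded_measurable_sin mt.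
have mt2 : measurable_fun setT (fun v => 2 * theta v).
  exact: measurable_funM (measurable_cst _) mt.
have bC2 := bounded_measurable_cos mt2; have bS2 := bounded_measurable_sin mt2.
have [a [b [ab1 ab_r]]] :=
  unit_vector_aligned (wmean (fun v => cos (theta v))) (wmean (fun v => sin (theta v))).
set c := fun v => a * cos (theta v) + b * sin (theta v).
set s := fun v => a * sin (theta v) - b * cos (theta v).
have bc : bounded_measurable c by apply: bounded_measurableD; exact: bounded_measurableZ.
have bs : bounded_measurable s by apply: bounded_measurableB; exact: bounded_measurableZ.
have bc2 : bounded_measurable (fun v => c v ^+ 2) := bounded_measurableM bc bc.
have bs2 : bounded_measurable (fun v => s v ^+ 2) := bounded_measurableM bs bs.
set P := wmean (fun v => c v ^+ 2); set Q := wmean (fun v => s v ^+ 2).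
have Q_ge0 : 0 <= Q := wmean_ge0 (fun v => sqr_ge0 (s v)).
have PQ1 : P + Q = 1.
  rewrite -wmeanD // -wmean1; congr wmean; apply: funext => v.
  exact: rotated_cos2Dsin2.
have rP : sqr_abs_fourier theta <= P.
  have := sqr_wmean_le bc; rewrite /c wmeanD ?wmeanZ //; try exact: bounded_measurableZ.
  by rewrite ab_r sqr_sqrtr // addr_ge0 ?sqr_ge0.
have PQ : (a ^+ 2 - b ^+ 2) * wmean (fun v => cos (2 * theta v)) +
          (2 * a * b) * wmean (fun v => sin (2 * theta v)) = P - Q.
  rewrite -!wmeanZ // -wmeanD -?wmeanB //; try exact: bounded_measurableZ.
  by congr wmean; apply: funext => v; exact: rotated_cos_sin_double.
have := sqr_dot2_le (a ^+ 2 - b ^+ 2) (2 * a * b)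
  (wmean (fun v => cos (2 * theta v))) (wmean (fun v => sin (2 * theta v))).
have -> : (a ^+ 2 - b ^+ 2) ^+ 2 + (2 * a * b) ^+ 2 = (a ^+ 2 + b ^+ 2) ^+ 2 by ring.
rewrite PQ ab1 expr1n mul1r; move: rP; rewrite /sqr_abs_fourier /=.
(* With S := sqr_abs_fourier:
   1 - S (2 theta) <= 1 - (P - Q)^2 = 4 P Q <= 4 Q = 4 (1 - P) <= 4 (1 - S theta). *)
have := sqr_ge0 Q; nra.
Qed.

End WeightedMean.

Lemma exists_pow2_ge {R : archiRealFieldType} (x : R) : exists n : nat, x <= 2 ^+ n.
Proof.
have [x_le0|x_gt0] := lerP x 0; first by exists 0%N; rewrite (le_trans x_le0).
have /ltW x_lt := archi_boundP (ltW x_gt0); exists (Num.Def.archi_bound x).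
by apply: le_trans x_lt _; rewrite -natrX ler_nat ltnW // ltn_expl.
Qed.

(* Double [x] until [N x] lands in the annulus [T <= N < 2 T]; each doubling
   multiplies [N x ^+ 2] by 4 and [D x] by at most 4. *)
Lemma quadratic_lower_bound_by_doubling {R : archiRealFieldType} {X : Type}
    (N D : X -> R) (dbl : X -> X) (T delta : R) :
  0 < T -> 0 <= delta ->
  (forall x, N (dbl x) = 2 * N x) -> (forall x, D (dbl x) <= 4 * D x) ->
  (forall x, T <= N x -> N x < 2 * T -> delta <= D x) ->
  forall x, 0 < N x -> N x < 2 * T -> delta / (4 * T ^+ 2) * N x ^+ 2 <= D x.
Proof.
move=> T_gt0 delta_ge0 N_dbl D_dbl D_annulus x Nx_gt0 Nx_lt.
have base y : T <= N y -> N y < 2 * T -> delta / (4 * T ^+ 2) * N y ^+ 2 <= D y.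
  move=> Ty yT; apply: le_trans (D_annulus y Ty yT).
  rewrite mulrAC ler_pdivrMr ?mulr_gt0 ?exprn_gt0 // ler_wpM2l //.
  by have := le_trans (ltW T_gt0) Ty; nra.
have [n] := exists_pow2_ge (T / N x); rewrite ler_pdivrMr //.
elim: n x Nx_gt0 Nx_lt => [|n IH] x Nx_gt0 Nx_lt Tn.
  by apply: base => //; rewrite expr0 mul1r in Tn.
have [Tx|xT] := lerP T (N x); first exact: base.
rewrite exprSr -mulrA in Tn.
have [Ndbl_gt0 Ndbl_lt] : 0 < 2 * N x /\ 2 * N x < 2 * T by split; lra.
have := IH (dbl x); rewrite N_dbl => /(_ Ndbl_gt0 Ndbl_lt Tn).
have := D_dbl x; nra.
Qed.

Lemma mulr_expRN_le_half {R : realType} (a b : R) :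
  0 < a -> 2 * ln (2 * a) <= b -> a * expR (- b) <= expR (- (b / 2)) / 2.
Proof.
move=> a_gt0 b_ge; have a2_gt0 : 0 < 2 * a by rewrite mulr_gt0.
have half : a * expR (- (b / 2)) <= 2^-1.
  have : expR (- (b / 2)) <= expR (- ln (2 * a)) by rewrite ler_expR; lra.
  have -> : expR (- ln (2 * a)) = (2 * a)^-1 by rewrite expRN lnK // posrE.
  rewrite invfM => e.
  by have := ler_wpM2l (ltW a_gt0) e; rewrite mulrCA mulfV ?gt_eqF // mulr1.
have -> : - b = - (b / 2) + - (b / 2) by rewrite -opprD -splitr.
by rewrite expRD mulrA [leRHS]mulrC ler_wpM2r ?expR_ge0.
Qed.

Lemma le_expR_of_sqr_le {R : realType} (x a : R) :
  0 <= x -> x ^+ 2 <= 1 - a -> x <= expR (- (a / 2)).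
Proof.
move=> x_ge0 xa; have := expR_ge1Dx (- a).
have -> : expR (- a) = expR (- (a / 2)) ^+ 2 by rewrite expr2 -expRD -opprD -splitr.
have := expR_gt0 (- (a / 2)); nra.
Qed.

Lemma le_expRN_mul {R : realType} (k c s : R) :
  k <= c -> 0 <= s -> expR (- (c * s)) <= expR (- (k * s)).
Proof. by move=> kc s_ge0; rewrite ler_expR lerN2 ler_wpM2r. Qed.

Lemma half_le_expRN {R : realType} (y : R) : y <= ln 2 -> 2^-1 <= expR (- y).
Proof.
move=> y_le; have -> : 2^-1 = expR (- ln 2) :> R by rewrite expRN lnK // posrE.
by rewrite ler_expR lerN2.
Qed.

Section FourierR3.
Variable R : realType.
Implicit Types (xi v : R3 R) (g : R3 R -> R).

Definition scale3 (k : R) xi : R3 R := ((k * c1 xi, k * c2 xi), k * c3 xi).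

Lemma measurable_dot3 xi : measurable_fun setT (dot3 xi).
Proof.
have m1 : measurable_fun setT (@c1 R).
  exact: measurableT_comp measurable_fst measurable_fst.
have m2 : measurable_fun setT (@c2 R).
  exact: measurableT_comp measurable_snd measurable_fst.
have m3 : measurable_fun setT (@c3 R) by exact: measurable_snd.
by apply: measurable_funD; first apply: measurable_funD;
  apply: measurable_funM => //; exact: measurable_cst.
Qed.

Lemma dot3_scale3l k xi v : dot3 (scale3 k xi) v = k * dot3 xi v.
Proof. by rewrite /dot3 /scale3 /c1 /c2 /c3 /=; ring. Qed.

Lemma norm3_ge0 xi : 0 <= norm3 xi.
Proof. exact: sqrtr_ge0. Qed.

Lemma norm3_scale3 k xi : 0 <= k -> norm3 (scale3 k xi) = k * norm3 xi.
Proof.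
move=> k_ge0; rewrite /norm3 (_ : sqnorm3 _ = k ^+ 2 * sqnorm3 xi).
  by rewrite sqrtrM ?sqr_ge0 // sqrtr_sqr ger0_norm.
by rewrite /sqnorm3 /dot3 /scale3 /c1 /c2 /c3 /=; ring.
Qed.

Lemma Fabs_ge0 g xi : 0 <= Fabs g xi.
Proof. exact: sqrtr_ge0. Qed.

Lemma sqr_Fabs g xi : Fabs g xi ^+ 2 = sqr_abs_fourier (@leb3 R) g (dot3 xi).
Proof. by rewrite /Fabs sqr_sqrtr ?addr_ge0 ?sqr_ge0 // /FIm sqrrN. Qed.

Variable g : R3 R -> R.
Hypotheses (mg : measurable_fun setT g) (g_ge0 : forall v, 0 <= g v).
Hypothesis g_int1 : (\int[@leb3 R]_v (g v)%:E = 1%:E)%E.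

Lemma Fabs_le1 xi : Fabs g xi <= 1.
Proof.
have := sqr_abs_fourier_le1 (mu := @leb3 R) mg g_ge0 g_int1 (measurable_dot3 xi).
by rewrite -sqr_Fabs; have := Fabs_ge0 g xi; nra.
Qed.

Lemma Fabs_double xi : 1 - Fabs g (scale3 2 xi) ^+ 2 <= 4 * (1 - Fabs g xi ^+ 2).
Proof.
rewrite !sqr_Fabs (_ : dot3 (scale3 2 xi) = fun v => 2 * dot3 xi v).
  exact: (sqr_abs_fourier_double (mu := @leb3 R) mg g_ge0 g_int1 (measurable_dot3 xi)).
by apply: funext => v; rewrite dot3_scale3l.
Qed.

Lemma Fabs_gaussian_ball T : 0 < T -> (forall xi, T <= norm3 xi -> Fabs g xi <= 2^-1) ->
  exists c, 0 < c /\ forall xi, norm3 xi < T -> Fabs g xi <= expR (- (c * norm3 xi ^+ 2)).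
Proof.
move=> T_gt0 half.
have annulus xi : T <= norm3 xi -> norm3 xi < 2 * T -> 3 / 4 <= 1 - Fabs g xi ^+ 2.
  by move=> Txi _; have := half xi Txi; have := Fabs_ge0 g xi; nra.
set c0 := 3 / 4 / (4 * T ^+ 2).
have lower xi : 0 < norm3 xi -> norm3 xi < 2 * T ->
    c0 * norm3 xi ^+ 2 <= 1 - Fabs g xi ^+ 2.
  apply: (quadratic_lower_bound_by_doubling (D := fun xi => 1 - Fabs g xi ^+ 2)
    (dbl := scale3 2) T_gt0) => // [y|y].
  - by rewrite norm3_scale3.
  - exact: Fabs_double.
have c0_gt0 : 0 < c0 by rewrite divr_gt0 // mulr_gt0 // exprn_gt0.
exists (c0 / 2); split=> [|xi xiT]; first by rewrite divr_gt0.
have [xi0|xi_neq0] := eqVneq (norm3 xi) 0.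
  by rewrite xi0 expr0n mulr0 oppr0 expR0 Fabs_le1.
have xi_gt0 : 0 < norm3 xi by rewrite lt_neqAle eq_sym xi_neq0 norm3_ge0.
rewrite mulrAC; apply: le_expR_of_sqr_le; first exact: Fabs_ge0.
by have := lower xi xi_gt0; lra.
Qed.

End FourierR3.

Lemma Fabs_tail {R : realType} (g : R3 R -> R) (K1 K2 : R) (phi : R -> R) :
  0 < K1 -> 0 < K2 -> phi x @[x --> +oo] --> +oo ->
  (forall xi, Fabs g xi <= K1 * expR (- (K2 * phi (norm3 xi)))) ->
  exists T, 0 < T /\ forall xi, T <= norm3 xi ->
    Fabs g xi <= expR (- (K2 / 2 * phi (norm3 xi))) / 2.
Proof.
move=> K1_gt0 K2_gt0 phi_oo hF.
have [T0 [_ phi_ge]] := (cvgryPge _).1 phi_oo (2 * ln (2 * K1) / K2).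
exists (Num.max (T0 + 1) 1); split=> [|xi Txi]; first by rewrite lt_max ltr01 orbT.
apply: le_trans (hF xi) _; rewrite mulrAC; apply: mulr_expRN_le_half => //.
rewrite -ler_pdivrMl // mulrC; apply: phi_ge.
by apply: lt_le_trans Txi; rewrite lt_max ltrDl ltr01.
Qed.

Theorem proposition10 (R : realType) (g : R3 R -> R) (K1 K2 : R) (phi : R -> R) :
  measurable_fun setT g ->
  (forall v, 0 <= g v) ->
  (\int[@leb3 R]_v (g v)%:E = 1%:E)%E ->
  (\int[@leb3 R]_v (g v * c1 v)%:E = 0%:E)%E ->
  (\int[@leb3 R]_v (g v * c2 v)%:E = 0%:E)%E ->
  (\int[@leb3 R]_v (g v * c3 v)%:E = 0%:E)%E ->
  (\int[@leb3 R]_v (g v * sqnorm3 v)%:E = 3%:E)%E ->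
  1 <= K1 -> 0 < K2 ->
  (forall t, 0 <= t -> 0 <= phi t) ->
  phi x @[x --> +oo] --> +oo ->
  (forall xi, Fabs g xi <= K1 * expR (- (K2 * phi (norm3 xi)))) ->
  exists eta : R, 0 < eta /\
    forall R0 : R, eta < R0 ->
      exists K : R, 0 < K /\
        (forall xi, norm3 xi < R0 -> Fabs g xi <= expR (- (K * norm3 xi ^+ 2))) /\
        (forall xi, R0 <= norm3 xi -> Fabs g xi <= expR (- (K * phi (norm3 xi)))).
Proof.
move=> mg g_ge0 g_int1 _ _ _ _ K1_ge1 K2_gt0 phi_ge0 phi_oo hF.
have [T [T_gt0 tail]] := Fabs_tail (lt_le_trans ltr01 K1_ge1) K2_gt0 phi_oo hF.
have phiN_ge0 xi : 0 <= K2 / 2 * phi (norm3 xi).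
  by rewrite mulr_ge0 ?phi_ge0 ?norm3_ge0 // divr_ge0 // ltW.
have half xi : T <= norm3 xi -> Fabs g xi <= 2^-1.
  move=> Txi; apply: le_trans (tail xi Txi) _.
  by rewrite ler_pdivrMr // mulVf // expR_le1 oppr_le0 phiN_ge0.
have [c [c_gt0 ball]] := Fabs_gaussian_ball mg g_ge0 g_int1 T_gt0 half.
exists T; split=> // R0 TR0; have R0_gt0 : 0 < R0 := le_lt_trans (ltW T_gt0) TR0.
set K := Num.min (Num.min c (ln 2 / R0 ^+ 2)) (K2 / 2).
have Kc : K <= c by rewrite /K !ge_min lexx.
have Kln : K <= ln 2 / R0 ^+ 2 by rewrite /K !ge_min lexx orbT.
have KK2 : K <= K2 / 2 by rewrite /K ge_min lexx orbT.
have K_gt0 : 0 < K by rewrite !lt_min c_gt0 !divr_gt0 ?ln_gt0 ?exprn_gt0 ?ltr1n.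
exists K; split=> //.
split=> xi xiR0; last first.
  apply: le_trans (tail xi (ltW (lt_le_trans TR0 xiR0))) _.
  apply: le_trans (le_expRN_mul KK2 (phi_ge0 _ (norm3_ge0 xi))).
  by rewrite ler_pdivrMr // ler_peMr ?expR_ge0 ?ler1n.
have [xiT|Txi] := ltP (norm3 xi) T.
  exact: le_trans (ball xi xiT) (le_expRN_mul Kc (sqr_ge0 _)).
apply: le_trans (half xi Txi) (half_le_expRN _).
have sqr_le : norm3 xi ^+ 2 <= R0 ^+ 2 by have := norm3_ge0 xi; nra.
apply: le_trans (ler_pM (ltW K_gt0) (sqr_ge0 _) Kln sqr_le) _.
by rewrite divfK // gt_eqF // exprn_gt0.
Qed.
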